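(* Let $S\subseteq\mathbb{N}^k$ be a slice and let $\mathbf{u},\mathbf{v}\in S$. If $\mathbf{u}\le\mathbf{v}$ and $M_{\mathbf{u}}=M_{\mathbf{v}}$, then $\mathbf{v}+M_{\mathbf{v}}\subseteq\mathbf{u}+M_{\mathbf{u}}$.
   Context: $\le$ is the componentwise order on $\mathbb{N}^k$; for $X\subseteq\mathbb{N}^k$, $\min X$ is the (finite) set of its minimal elements and $X^*$ the submonoid generated by $X$. A slice is a set $S\subseteq\mathbb{N}^k$ such that whenever $\mathbf{u},\mathbf{u}+\mathbf{v},\mathbf{u}+\mathbf{w}\in S$ for $\mathbf{u},\mathbf{v},\mathbf{w}\in\mathbb{N}^k$, then $\mathbf{u}+\mathbf{v}+\mathbf{w}\in S$. For $\mathbf{u}\in S$ let $S-\mathbf{u}=\{\mathbf{v}\in\mathbb{N}^k\mid\mathbf{u}+\mathbf{v}\in S\}$ and $M_{\mathbf{u}}=(\min((S-\mathbf{u})\setminus\{\mathbf{0}\}))^*$. *)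

From mathcomp Require Import all_boot.
Set Implicit Arguments. Unset Strict Implicit. Unset Printing Implicit Defensive.

Definition vec (k : nat) := {ffun 'I_k -> nat}.

Definition vzero k : vec k := [ffun => 0].
Definition vadd k (u v : vec k) : vec k := [ffun i => u i + v i].

Definition vle k (u v : vec k) : Prop := forall i, u i <= v i.

Definition is_slice k (S : vec k -> Prop) : Prop :=
  forall u v w : vec k, S u -> S (vadd u v) -> S (vadd u w) ->
    S (vadd (vadd u v) w).

Definition shift k (S : vec k -> Prop) (u : vec k) : vec k -> Prop :=
  fun v => S (vadd u v).

Definition minset k (X : vec k -> Prop) : vec k -> Prop :=
  fun x => X x /\ forall y, X y -> vle y x -> y = x.

Inductive gen k (X : vec k -> Prop) : vec k -> Prop :=
| gen0 : gen X (vzero k)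
| genS a b : X a -> gen X b -> gen X (vadd a b).

Definition Mset k (S : vec k -> Prop) (u : vec k) : vec k -> Prop :=
  gen (minset (fun v => shift S u v /\ v <> vzero k)).

(* Write v = u + w. Since S is a slice, S - u is closed under addition and
   S - u ⊆ S - t ⊆ S - v for every t ∈ S with u ≤ t ≤ v. The minimal nonzero
   elements of S - u are the atoms of M_u, so M_u = M_v forces
   min((S - u) \ {0}) = min((S - v) \ {0}), and then the same set is
   min((S - t) \ {0}) for every intermediate t. Peeling off one such minimal
   element below v - t at a time shows w ∈ M_v = M_u, and
   v + M_v = u + (w + M_u) ⊆ u + M_u. *)
From Stdlib Require Import Classical.
From Pilot Require Import Defs.
From mathcomp Require Import all_boot.

Section Vectors.
Context {k : nat}.
Implicit Types (a b c x : vec k).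

Lemma vaddA a b c : vadd (vadd a b) c = vadd a (vadd b c).
Proof. by apply/ffunP => i; rewrite !ffunE addnA. Qed.

Lemma vaddC a b : vadd a b = vadd b a.
Proof. by apply/ffunP => i; rewrite !ffunE addnC. Qed.

Lemma vaddv0 a : vadd a (vzero k) = a.
Proof. by apply/ffunP => i; rewrite !ffunE addn0. Qed.

Lemma vle_refl a : vle a a.
Proof. by move=> i. Qed.

Lemma vle_trans {a b c} : vle a b -> vle b c -> vle a c.
Proof. by move=> ab bc i; apply: leq_trans (ab i) (bc i). Qed.

Lemma vle_anti {a b} : vle a b -> vle b a -> a = b.
Proof. by move=> ab ba; apply/ffunP => i; apply/anti_leq; rewrite ab ba. Qed.

Lemma vle_addr a b : vle a (vadd a b).
Proof. by move=> i; rewrite ffunE leq_addr. Qed.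

Lemma vleP {a b} : vle a b -> exists c, b = vadd a c.
Proof.
by move=> ab; exists [ffun i => b i - a i]; apply/ffunP => i; rewrite !ffunE subnKC.
Qed.

Definition vsum x := \sum_i x i.

Lemma vsum_add a b : vsum (vadd a b) = vsum a + vsum b.
Proof. by rewrite /vsum -big_split; apply: eq_bigr => i _; rewrite ffunE. Qed.

Lemma vsum_ltn_add a b : b <> vzero k -> vsum a < vsum (vadd a b).
Proof.
move=> b_neq0; rewrite vsum_add -addn1 leq_add2l lt0n; apply/negP => b0.
apply: b_neq0; apply/ffunP => i; rewrite ffunE.
by move: b0; rewrite /vsum sum_nat_eq0 => /forallP/(_ i)/eqP.
Qed.

End Vectors.

Section MinimalElements.
Context {k : nat}.
Implicit Types (X Y Z : vec k -> Prop) (x y : vec k).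

Lemma minset_le {X x} : X x -> exists2 m, Defs.minset X m & vle m x.
Proof.
have [n] := ubnP (vsum x); elim: n x => // n IH x /ltnSE x_le Xx.
case: (classic (exists y, [/\ X y, vle y x & y <> x])) => [[y [Xy yx y_neq]]|].
  have [c xE] := vleP yx.
  have c_neq0 : c <> vzero k by move=> c0; apply: y_neq; rewrite xE c0 vaddv0.
  have [|m Xm my] := IH y _ Xy; first by apply: leq_trans x_le; rewrite xE vsum_ltn_add.
  by exists m => //; apply: vle_trans yx.
move=> no_below; exists x => //; split=> // y Xy yx.
by apply: NNPP => y_neq; apply: no_below; exists y.
Qed.

Lemma minset_sandwich X Y Z :
  (forall x, X x -> Y x) -> (forall x, Y x -> Z x) ->
  (forall x, Defs.minset X x <-> Defs.minset Z x) ->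
  forall x, Defs.minset Y x <-> Defs.minset Z x.
Proof.
move=> XY YZ minXZ x; split.
- case=> Yx minY; split=> [|z Zz zx]; first exact: YZ.
  have [m /[dup] /minXZ [Xm _] mZ mz] := minset_le Zz.
  have mx : m = x by apply: minY _ (XY _ Xm) (vle_trans mz zx).
  by apply: vle_anti zx _; rewrite -mx.
- move=> /[dup] /minXZ [Xx _] [_ minZ]; split=> [|y Yy]; first exact: XY.
  exact/minZ/YZ.
Qed.

Definition atoms X := Defs.minset (fun x => X x /\ x <> vzero k).

Lemma atoms_le {X x} : X x -> x <> vzero k -> exists2 a, atoms X a & vle a x.
Proof.
by move=> Xx x_neq0; apply: (@minset_le (fun y => X y /\ y <> vzero k) x (conj Xx x_neq0)).
Qed.

Lemma atoms_sandwich {X Y Z} :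
  (forall x, X x -> Y x) -> (forall x, Y x -> Z x) ->
  (forall x, atoms X x <-> atoms Z x) ->
  forall x, atoms Y x <-> atoms Z x.
Proof.
move=> XY YZ; apply: minset_sandwich => x [? ?]; split => //; [exact: XY | exact: YZ].
Qed.

End MinimalElements.

Section Monoids.
Context {k : nat}.
Implicit Types (X Y : vec k -> Prop) (a b x : vec k).

Lemma gen_mem {X a} : X a -> gen X a.
Proof. by move=> Xa; rewrite -[a]vaddv0; apply: genS => //; apply: gen0. Qed.

Lemma gen_add X a b : gen X a -> gen X b -> gen X (vadd a b).
Proof.
elim=> [|c d Xc _ IH] Gb; first by rewrite vaddC vaddv0.
by rewrite vaddA; apply: genS => //; apply: IH.
Qed.

Lemma gen_closed X Y :
  Y (vzero k) -> (forall a b, Y a -> Y b -> Y (vadd a b)) ->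
  (forall a, X a -> Y a) -> forall a, gen X a -> Y a.
Proof. by move=> Y0 YD XY a; elim=> // c d /XY Yc _; apply: YD. Qed.

Lemma atoms_gen {X Y a} :
  (forall b, Y b -> X b /\ b <> vzero k) -> atoms X a -> gen Y a -> Y a.
Proof.
move=> YX [[_ a_neq0] minX] Ga; case: Ga a_neq0 minX => [[] //|b c Yb _ _ minX].
by rewrite -(minX b (YX _ Yb) (vle_addr b c)).
Qed.

Lemma atoms_eq_of_gen {X Z} :
  (forall x, X x -> Z x) -> (forall x, gen (atoms X) x -> X x) ->
  (forall x, gen (atoms X) x <-> gen (atoms Z) x) ->
  forall x, atoms X x <-> atoms Z x.
Proof.
move=> XZ genX genXZ x; split=> Ax.
- have atomsZ_X b : atoms Z b -> X b /\ b <> vzero k.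
    by move=> Zb; split; [exact/genX/genXZ/gen_mem | case: Zb => [[]]].
  exact: atoms_gen atomsZ_X Ax (iffLR (genXZ x) (gen_mem Ax)).
- have atomsX_Z b : atoms X b -> Z b /\ b <> vzero k.
    by move=> [[Xb b_neq0] _]; split=> //; apply: XZ.
  exact: atoms_gen atomsX_Z Ax (iffRL (genXZ x) (gen_mem Ax)).
Qed.

End Monoids.

Section Slices.
Context {k : nat} {S : vec k -> Prop}.
Hypothesis sliceS : is_slice S.
Implicit Types (a b t u v : vec k).

Lemma shift_add u a b : S u -> shift S u a -> shift S u b -> shift S u (vadd a b).
Proof. by move=> Su Sa Sb; rewrite /shift -vaddA; apply: sliceS. Qed.

Lemma Mset_shift u a : S u -> Mset S u a -> shift S u a.
Proof.
move=> Su; apply: gen_closed => [|b c|b [[] //]]; last exact: shift_add.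
by rewrite /shift vaddv0.
Qed.

Lemma shift_le u v a : S u -> S v -> vle u v -> shift S u a -> shift S v a.
Proof.
move=> Su Sv /vleP [w vE] Sa; rewrite /shift vE vaddA.
by apply: shift_add; rewrite // /shift -vE.
Qed.

Section EqualMonoids.
Context {u v : vec k}.
Hypotheses (Su : S u) (Sv : S v) (uv : vle u v).
Hypothesis MuMv : forall x, Mset S u x <-> Mset S v x.

Lemma atoms_shift_eq x : atoms (shift S u) x <-> atoms (shift S v) x.
Proof.
apply: (atoms_eq_of_gen _ _ MuMv) => y; [exact: shift_le Su Sv uv | exact: Mset_shift Su].
Qed.

Lemma atoms_shift_between t x : S t -> vle u t -> vle t v ->
  atoms (shift S t) x <-> atoms (shift S v) x.
Proof.
move=> St ut tv; apply: (atoms_sandwich _ _ atoms_shift_eq) => y;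
  [exact: shift_le Su St ut | exact: shift_le St Sv tv].
Qed.

Lemma Mset_gap w t : S t -> vle u t -> v = vadd t w -> Mset S v w.
Proof.
have [n] := ubnP (vsum w); elim: n w t => // n IH w t /ltnSE w_le St ut vE.
have [-> | w_neq0] := classic (w = vzero k); first exact: gen0.
have Sw : shift S t w by rewrite /shift -vE.
have [a /[dup] Aa [[Sa a_neq0] _] aw] := atoms_le Sw w_neq0.
have [w' wE] := vleP aw.
have tv : vle t v by rewrite vE; apply: vle_addr.
have {}Aa := iffLR (atoms_shift_between t a St ut tv) Aa.
rewrite wE; apply: genS Aa (IH w' (vadd t a) _ Sa _ _).
- by apply: leq_trans w_le; rewrite wE vaddC vsum_ltn_add.
- exact: vle_trans ut (vle_addr t a).
- by rewrite vaddA -wE.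
Qed.

End EqualMonoids.
End Slices.

Theorem lemma5 (k : nat) (S : vec k -> Prop) (u v : vec k) :
  is_slice S -> S u -> S v -> vle u v ->
  (forall x, Mset S u x <-> Mset S v x) ->
  forall x, Mset S v x -> exists y, Mset S u y /\ vadd v x = vadd u y.
Proof.
move=> sliceS Su Sv uv MuMv x Mx.
have [w vE] := vleP uv.
have Mw : Mset S v w := Mset_gap sliceS Su Sv uv MuMv w u Su (vle_refl u) vE.
exists (vadd w x); split; first exact/MuMv/gen_add.
by rewrite vE vaddA.
Qed.
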